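(* Let $k\ge2$, $\lambda>0$, $0<\theta<1$, $a=\lambda^{1/k}$, and $\gamma(u)=a(1+\theta)-u+\frac{u-a\theta}{1+u^k}$, which maps $[a\theta,a]$ into itself and has a unique fixed point $\xi\in(a\theta,a)$. If either $\theta\ge\frac{k-1}{k}$, or $\theta<\frac{k-1}{k}$ and $\lambda<\frac{1}{k-1-k\theta}$, then $\lim_{n\to\infty}\gamma^{(n)}(\xi_0)=\xi$ for every $\xi_0\in[a\theta,a]$, where $\gamma^{(n)}$ denotes the $n$-fold iterate of $\gamma$. *)

From Stdlib Require Import Reals.
Open Scope R_scope.

Definition aval (k : nat) (lam : R) : R := Rpower lam (/ INR k).

Definition gam (k : nat) (lam theta : R) (u : R) : R :=
  let a := aval k lam in
  a * (1 + theta) - u + (u - a * theta) / (1 + u ^ k).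

(* gamma maps [a theta, a] into itself, and on that interval
   gamma'(x) = -1 + (1 - x^(k-1) ((k-1) x - k a theta)) / (1 + x^k)^2.
   The term x^(k-1) ((k-1) x - k a theta) is at most
   lambda * max(0, k-1-k theta), which the hypothesis on lambda and theta
   keeps below 1; hence -1 < gamma' <= 0 uniformly on the interval, gamma is
   a contraction there by the mean value theorem, and its iterates converge
   geometrically to the fixed point. *)

From Stdlib Require Import Reals Lra Lia.
From Coquelicot Require Import Coquelicot.
Open Scope R_scope.

Lemma Un_cv_of_geometric_bound (u : nat -> R) (l c C : R) :
  0 <= c < 1 -> (forall n, Rabs (u n - l) <= c ^ n * C) -> Un_cv u l.
Proof.
  intros hc hu. apply is_lim_seq_Reals.
  assert (hgeom : is_lim_seq (fun n => c ^ n * C) 0).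
  { replace (Finite 0) with (Rbar_mult 0 C) by (simpl; f_equal; ring).
    apply is_lim_seq_scal_r, is_lim_seq_geom. rewrite Rabs_pos_eq; lra. }
  assert (hdiff : is_lim_seq (fun n => u n - l) 0).
  { apply is_lim_seq_abs_0,
      (is_lim_seq_le_le (fun _ => 0) _ (fun n => c ^ n * C));
      [|apply is_lim_seq_const|exact hgeom].
    intros n. split; [apply Rabs_pos|apply hu]. }
  replace (Finite l) with (Rbar_plus 0 l) by (simpl; f_equal; ring).
  apply (is_lim_seq_ext (fun n => (u n - l) + l)); [intros n; ring|].
  apply is_lim_seq_plus'; [exact hdiff|apply is_lim_seq_const].
Qed.

Lemma iter_contraction_cv (f : R -> R) (P : R -> Prop) (xi c : R) :
  0 <= c < 1 ->
  (forall u, P u -> P (f u)) ->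
  (forall u, P u -> Rabs (f u - xi) <= c * Rabs (u - xi)) ->
  forall x0, P x0 -> Un_cv (fun n => Nat.iter n f x0) xi.
Proof.
  intros hc hP hcon x0 hx0.
  assert (hiter : forall n, P (Nat.iter n f x0) /\
            Rabs (Nat.iter n f x0 - xi) <= c ^ n * Rabs (x0 - xi)).
  { induction n as [|n [IHP IHd]]; simpl; [split; [exact hx0|lra]|].
    split; [apply hP, IHP|].
    apply Rle_trans with (c * Rabs (Nat.iter n f x0 - xi)); [apply hcon, IHP|].
    rewrite Rmult_assoc. apply Rmult_le_compat_l; lra. }
  apply (Un_cv_of_geometric_bound _ _ c (Rabs (x0 - xi))); [exact hc|].
  intros n. apply hiter.
Qed.

Lemma lipschitz_of_derivative_bound (f f' : R -> R) (l r c : R) :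
  (forall x, l <= x <= r -> derivable_pt_lim f x (f' x)) ->
  (forall x, l <= x <= r -> Rabs (f' x) <= c) ->
  forall u v, l <= u <= r -> l <= v <= r ->
    Rabs (f u - f v) <= c * Rabs (u - v).
Proof.
  intros hder hbound u v hu hv.
  assert (hmin : l <= Rmin v u) by (apply Rmin_glb; lra).
  assert (hmax : Rmax v u <= r) by (apply Rmax_lub; lra).
  destruct (MVT_abs f f' v u) as [z [hz hzI]].
  { intros z hz. apply hder. lra. }
  rewrite hz. apply Rmult_le_compat_r; [apply Rabs_pos|]. apply hbound. lra.
Qed.

Lemma aval_pos (k : nat) (lam : R) : 0 < aval k lam.
Proof. apply exp_pos. Qed.

Lemma aval_pow (k : nat) (lam : R) :
  (k <> 0)%nat -> 0 < lam -> aval k lam ^ k = lam.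
Proof.
  intros hk hlam. unfold aval.
  rewrite <- Rpower_pow by apply exp_pos.
  rewrite Rpower_mult, Rinv_l by (apply not_0_INR; exact hk).
  apply Rpower_1, hlam.
Qed.

Lemma pow_pred_mul (x : R) (k : nat) : (1 <= k)%nat -> x ^ k = x * x ^ pred k.
Proof. intros hk. destruct k as [|k]; [lia|reflexivity]. Qed.

Definition dgam (k : nat) (B x : R) : R :=
  -1 + (1 - x ^ pred k * ((INR k - 1) * x - INR k * B)) / (1 + x ^ k) ^ 2.

Section Gamma.

Variables (k : nat) (lam theta : R).
Hypotheses (hk : (1 <= k)%nat) (hlam : 0 < lam) (htheta : 0 <= theta).

Local Notation a := (aval k lam).

Let a_pow_k : a ^ k = lam.
Proof. apply aval_pow; [lia|exact hlam]. Qed.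

Lemma gam_maps_interval (u : R) :
  a * theta <= u <= a -> a * theta <= gam k lam theta u <= a.
Proof.
  intros hu. unfold gam.
  pose proof (aval_pos k lam).
  assert (hq : 0 <= u ^ k) by (apply pow_le; nra).
  assert (hd : 0 <= (u - a * theta) / (1 + u ^ k))
    by (apply Rdiv_le_0_compat; nra).
  assert ((u - a * theta) / (1 + u ^ k) <= u - a * theta).
  { apply (Rmult_le_reg_r (1 + u ^ k)); [lra|]. unfold Rdiv.
    rewrite Rmult_assoc, Rinv_l by lra. nra. }
  lra.
Qed.

Lemma gam_derivative (x : R) : 0 <= x ->
  derivable_pt_lim (gam k lam theta) x (dgam k (a * theta) x).
Proof.
  intros hx. apply is_derive_Reals. unfold gam, dgam.
  assert (hq : 0 <= x ^ k) by (apply pow_le; lra).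
  auto_derive; [lra|].
  rewrite (pow_pred_mul x k hk). field.
  rewrite <- (pow_pred_mul x k hk). lra.
Qed.

Lemma slope_term_le (x : R) : a * theta <= x <= a ->
  x ^ pred k * ((INR k - 1) * x - INR k * (a * theta))
    <= lam * Rmax 0 (INR k - 1 - INR k * theta).
Proof.
  intros hx.
  pose proof (aval_pos k lam) as ha.
  assert (hK : 1 <= INR k) by (apply (le_INR 1); lia).
  assert (hp : 0 <= x ^ pred k) by (apply pow_le; nra).
  assert (hpa : x ^ pred k <= a ^ pred k) by (apply pow_incr; split; nra).
  assert (hlam_a : a ^ pred k * a = lam)
    by (rewrite Rmult_comm, <- pow_pred_mul by exact hk; exact a_pow_k).
  assert (hm0 := Rmax_l 0 (INR k - 1 - INR k * theta)).
  assert (hm := Rmax_r 0 (INR k - 1 - INR k * theta)).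
  destruct (Rle_lt_dec ((INR k - 1) * x - INR k * (a * theta)) 0) as [hneg|hpos].
  - assert (0 <= lam * Rmax 0 (INR k - 1 - INR k * theta)) by nra.
    assert (x ^ pred k * ((INR k - 1) * x - INR k * (a * theta)) <= 0) by nra.
    lra.
  - apply Rle_trans with (a ^ pred k * (a * Rmax 0 (INR k - 1 - INR k * theta))).
    + assert (a * (INR k - 1 - INR k * theta)
                <= a * Rmax 0 (INR k - 1 - INR k * theta))
        by (apply Rmult_le_compat_l; lra).
      apply Rmult_le_compat; nra.
    + rewrite <- Rmult_assoc, hlam_a. lra.
Qed.

Lemma dgam_bound (dl x : R) : 0 < dl -> a * theta <= x <= a ->
  x ^ pred k * ((INR k - 1) * x - INR k * (a * theta)) <= 1 - dl ->
  Rabs (dgam k (a * theta) x) <= 1 - dl / (1 + lam) ^ 2.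
Proof.
  intros hdl hx hslope. unfold dgam.
  pose proof (aval_pos k lam) as ha.
  assert (hK : 0 <= INR k) by apply pos_INR.
  assert (hp : 0 <= x ^ pred k) by (apply pow_le; nra).
  assert (hxk : x ^ k <= lam)
    by (rewrite <- a_pow_k; apply pow_incr; split; nra).
  rewrite (pow_pred_mul x k hk) in hxk |- *.
  set (q := x * x ^ pred k) in *.
  assert (hq : 0 <= q) by (unfold q; apply Rmult_le_pos; nra).
  set (N := 1 - x ^ pred k * ((INR k - 1) * x - INR k * (a * theta))).
  (* N = 1 + x^k - (x - a theta) k x^(k-1) <= 1 + x^k *)
  assert (hN : N <= (1 + q) ^ 2).
  { assert (0 <= (x - a * theta) * (INR k * x ^ pred k))
      by (apply Rmult_le_pos; nra).
    unfold N, q in *. nra. }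
  assert (hD : 0 < (1 + q) ^ 2) by nra.
  assert (hfrac_le : N / (1 + q) ^ 2 <= 1).
  { apply (Rmult_le_reg_r ((1 + q) ^ 2)); [exact hD|].
    unfold Rdiv. rewrite Rmult_assoc, Rinv_l by lra. lra. }
  assert (hfrac_ge : dl / (1 + lam) ^ 2 <= N / (1 + q) ^ 2).
  { apply Rle_trans with (dl / (1 + q) ^ 2); unfold Rdiv.
    - apply Rmult_le_compat_l; [lra|].
      apply Rinv_le_contravar; [exact hD|]. nra.
    - apply Rmult_le_compat_r; [left; apply Rinv_0_lt_compat, hD|].
      unfold N. lra. }
  rewrite Rabs_left1; lra.
Qed.

Lemma gam_contraction (xi dl : R) : 0 < dl ->
  (forall x, a * theta <= x <= a ->
     x ^ pred k * ((INR k - 1) * x - INR k * (a * theta)) <= 1 - dl) ->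
  a * theta <= xi <= a -> gam k lam theta xi = xi ->
  forall u, a * theta <= u <= a ->
    Rabs (gam k lam theta u - xi) <= (1 - dl / (1 + lam) ^ 2) * Rabs (u - xi).
Proof.
  intros hdl hslope hxi hfix u hu.
  pose proof (aval_pos k lam).
  rewrite <- hfix at 1.
  apply (lipschitz_of_derivative_bound _ (dgam k (a * theta)) (a * theta) a);
    [| |exact hu|exact hxi].
  - intros x hx. apply gam_derivative. nra.
  - intros x hx. apply dgam_bound; [exact hdl|exact hx|apply hslope, hx].
Qed.

End Gamma.

Lemma slope_bound_lt_1 (k : nat) (lam theta : R) : (1 <= k)%nat -> 0 < lam ->
  ((INR k - 1) / INR k <= theta \/
   (theta < (INR k - 1) / INR k /\ lam < / (INR k - 1 - INR k * theta))) ->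
  lam * Rmax 0 (INR k - 1 - INR k * theta) < 1.
Proof.
  intros hk hlam hcond.
  assert (hK : 1 <= INR k) by (apply (le_INR 1); lia).
  assert (hkk : (INR k - 1) / INR k * INR k = INR k - 1) by (field; lra).
  destruct hcond as [hge | [hlt hsmall]].
  - rewrite Rmax_left; [lra|nra].
  - assert (hm : 0 < INR k - 1 - INR k * theta) by nra.
    rewrite Rmax_right by lra.
    apply (Rmult_lt_compat_r (INR k - 1 - INR k * theta)) in hsmall; [|exact hm].
    rewrite Rinv_l in hsmall by lra. exact hsmall.
Qed.

Theorem mainTheorem10 (k : nat) (lam theta xi : R)
  (hk : (2 <= k)%nat) (hlam : 0 < lam) (ht0 : 0 < theta) (ht1 : theta < 1)
  (hxi : aval k lam * theta < xi < aval k lam)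
  (hfix : gam k lam theta xi = xi)
  (hcond : (INR k - 1) / INR k <= theta \/
           (theta < (INR k - 1) / INR k /\ lam < / (INR k - 1 - INR k * theta))) :
  forall xi0 : R, aval k lam * theta <= xi0 <= aval k lam ->
    Un_cv (fun n : nat => Nat.iter n (gam k lam theta) xi0) xi.
Proof.
  assert (hk1 : (1 <= k)%nat) by lia.
  set (m := Rmax 0 (INR k - 1 - INR k * theta)).
  assert (hm : 0 <= lam * m) by (apply Rmult_le_pos; [lra|apply Rmax_l]).
  assert (hmargin : lam * m < 1) by (apply slope_bound_lt_1; assumption).
  set (dl := 1 - lam * m).
  assert (hdl : 0 < dl <= 1) by (unfold dl; lra).
  assert (hc : 0 <= 1 - dl / (1 + lam) ^ 2 < 1).
  { assert (hquot : 0 < dl / (1 + lam) ^ 2 <= dl).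
    { split; [apply Rdiv_lt_0_compat; nra|].
      apply Rmult_le_reg_r with ((1 + lam) ^ 2); [nra|].
      unfold Rdiv. rewrite Rmult_assoc, Rinv_l by nra. nra. }
    lra. }
  apply (iter_contraction_cv _ (fun u => aval k lam * theta <= u <= aval k lam)
           xi _ hc).
  - apply gam_maps_interval; lra.
  - apply (gam_contraction k lam theta hk1 hlam (Rlt_le _ _ ht0) xi dl); [lra| |lra|exact hfix].
    intros x hx. replace (1 - dl) with (lam * m) by (unfold dl; ring).
    apply slope_term_le; [exact hk1|exact hlam|lra|exact hx].
Qed.
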